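(* Let $p>5$ be prime, $q=p^h$, $n>3$, and let $\mathcal{F}: aX^n+bY^n=Z^n$ be an irreducible Fermat curve over $\mathbb{F}_q$. Suppose $p$ divides $n+1$. Then $\mathcal{F}$ is $\mathbb{F}_q$-Frobenius nonclassical with respect to $\Sigma_2$ if and only if $a+b=1$ and $n=q-1$.
   Context: $\Sigma_2$ is the linear system of plane conics. The function field of $\mathcal{F}$ is $\overline{\mathbb{F}}_q(x,y)$ with $ax^n+by^n=1$; $t$ is a separating variable and $D_t^{(r)}$ the $r$-th Hasse derivative. The $\mathbb{F}_q$-Frobenius sequence $(\nu_0,\dots,\nu_4)$ of $\mathcal{F}$ w.r.t. $\Sigma_2$ is the lexicographically minimal increasing sequence of nonnegative integers such that the $6\times6$ determinant, with columns indexed by monomials $x^iy^j$ ($0\le i+j\le2$), first row $((x^iy^j)^q)$ and $(k+2)$-th row $(D_t^{(\nu_k)}(x^iy^j))$, is nonzero; $\mathcal{F}$ is $\mathbb{F}_q$-Frobenius nonclassical w.r.t. $\Sigma_2$ if $(\nu_0,\dots,\nu_4)\neq(0,1,2,3,4)$. *)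

From HB Require Import structures.
From mathcomp Require Import all_boot all_order all_algebra all_field.
From mathcomp Require Import mpoly.
Set Implicit Arguments. Unset Strict Implicit. Unset Printing Implicit Defensive.
Import Order.TTheory GRing.Theory.
Local Open Scope ring_scope.

(* K is (isomorphic to) the algebraic closure of F_p:
   an algebraically closed field of characteristic p all of whose elements
   are fixed by some positive power of the Frobenius. *)
Definition is_alg_closure_Fp (p : nat) (K : closedFieldType) : Prop :=
  p \in [pchar K] /\ forall z : K, exists k : nat, (0 < k)%N /\ z ^+ (p ^ k) = z.

Definition mpoly_irreducible (R : fieldType) (k : nat) (P : {mpoly R[k]}) : Prop :=
  (1 < msize P)%N /\
  forall Q S : {mpoly R[k]}, P = Q * S -> (msize Q <= 1)%N \/ (msize S <= 1)%N.

Definition fermat_poly (R : fieldType) (a b : R) (n : nat) : {mpoly R[3]} :=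
  a *: 'X_(0 : 'I_3) ^+ n + b *: 'X_(1 : 'I_3) ^+ n - 'X_(2 : 'I_3) ^+ n.

Definition transcendental_over (K L : fieldType) (iota : {rmorphism K -> L})
  (x : L) : Prop :=
  forall P : {poly K}, P != 0 -> (map_poly iota P).[x] != 0.

Definition hasse_derivation (K L : fieldType) (iota : {rmorphism K -> L})
  (t : L) (D : nat -> L -> L) : Prop :=
  [/\ forall f, D 0%N f = f,
      forall r f g, D r (f + g) = D r f + D r g,
      forall r f g, D r (f * g) = \sum_(i < r.+1) D i f * D (r - i)%N g,
      forall r c, (0 < r)%N -> D r (iota c) = 0 &
      D 1%N t = 1 /\ forall r, (1 < r)%N -> D r t = 0].

Definition conic_monomials (L : fieldType) (x y : L) : seq L :=
  [:: 1; x; y; x ^+ 2; x * y; y ^+ 2].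

Definition frob_matrix (L : fieldType) (q : nat) (D : nat -> L -> L) (x y : L)
  (nu : 'I_5 -> nat) : 'M[L]_6 :=
  \matrix_(i < 6, j < 6)
    (if unlift ord0 i is Some k then D (nu k) (nth 0 (conic_monomials x y) j)
     else (nth 0 (conic_monomials x y) j) ^+ q).

Definition strictly_increasing5 (nu : 'I_5 -> nat) : Prop :=
  forall i j : 'I_5, (i < j)%N -> (nu i < nu j)%N.

Definition frob_admissible (L : fieldType) (q : nat) (D : nat -> L -> L)
  (x y : L) (nu : 'I_5 -> nat) : Prop :=
  strictly_increasing5 nu /\ \det (frob_matrix q D x y nu) != 0.

Definition lex_le5 (nu mu : 'I_5 -> nat) : Prop :=
  (forall i, nu i = mu i) \/
  exists k : 'I_5, (forall i : 'I_5, (i < k)%N -> nu i = mu i) /\ (nu k < mu k)%N.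

Definition is_frobenius_sequence (L : fieldType) (q : nat) (D : nat -> L -> L)
  (x y : L) (nu : 'I_5 -> nat) : Prop :=
  frob_admissible q D x y nu /\
  forall mu, frob_admissible q D x y mu -> lex_le5 nu mu.

Definition classical_seq : 'I_5 -> nat := fun i => nat_of_ord i.

Definition frobenius_nonclassical (L : fieldType) (q : nat) (D : nat -> L -> L)
  (x y : L) : Prop :=
  ~ is_frobenius_sequence q D x y classical_seq.

From HB Require Import structures.
From mathcomp Require Import all_boot all_order all_algebra all_field.
From mathcomp Require Import mpoly.
From mathcomp Require Import ring zify.
Set Implicit Arguments. Unset Strict Implicit. Unset Printing Implicit Defensive.
Import GRing.Theory.
Local Open Scope ring_scope.

(** Write q = p^h, al = a x^(n+1) and be = b y^(n+1).  As p divides n+1, al and be are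
    p-th powers, so the Hasse derivatives D^(1), ..., D^(4) treat them as constants, and
    multiplying the curve equation by xy gives the relation xy = al y + be x between the conic
    monomials.  Differentiating it shows that every D^(r) y is a multiple of D^(1) y, and that
    this relation spans all linear relations among the rows D^(0), ..., D^(4) of the monomials.
    Since (0, ..., 4) is lexicographically least, the curve is Frobenius nonclassical iff the
    Frobenius row satisfies the same relation: (xy)^q = be x^q + al y^q.
    If n+1 = q this says a + b = 1.  Otherwise, dividing by a power of xy and extracting p-power
    roots (a and b are fixed by the q-Frobenius) yields a relation a' x^e + b' y^e = 1 with
    e < n or x^e y^e = b' x^e + a' y^e, where p does not divide e.  Eliminating D^(1) y between
    its derivative and that of the curve equation gives c x^N = c' y^N with N > 0, which the
    curve equation and the transcendence of x forbid. *)

Lemma eq_lincomb (R : comNzRingType) (l r l1 r1 k1 : R) :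
  l1 = r1 -> l - r = k1 * (l1 - r1) -> l = r.
Proof. by move=> E1 E; apply/eqP; rewrite -subr_eq0 E E1 subrr mulr0. Qed.

Lemma eq_lincomb2 (R : comNzRingType) (l r l1 r1 l2 r2 k1 k2 : R) :
  l1 = r1 -> l2 = r2 -> l - r = k1 * (l1 - r1) + k2 * (l2 - r2) -> l = r.
Proof. by move=> E1 E2 E; apply/eqP; rewrite -subr_eq0 E E1 E2 !subrr !mulr0 addr0. Qed.

Definition conic_relation (L : fieldType) (al be : L) : seq L :=
  [:: 0; - be; - al; 0; 1; 0].

Lemma sum_conic_monomials (L : fieldType) (x y : L) (c : 'I_6 -> L) (F : L -> L) :
  \sum_(j < 6) c j * F (conic_monomials x y)`_j =
  c (@Ordinal 6 0 isT) * F 1 + c (@Ordinal 6 1 isT) * F x + c (@Ordinal 6 2 isT) * F y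
  + c (@Ordinal 6 3 isT) * F (x ^+ 2) + c (@Ordinal 6 4 isT) * F (x * y)
  + c (@Ordinal 6 5 isT) * F (y ^+ 2).
Proof.
rewrite !big_ord_recl big_ord0 addr0 !addrA.
by congr (_ + _ + _ + _ + _ + _); congr (c _ * _); apply: val_inj.
Qed.

Lemma sum_conic_relation (L : fieldType) (x y al be : L) (F : L -> L) :
  \sum_(j < 6) (conic_relation al be)`_j * F (conic_monomials x y)`_j =
  F (x * y) - al * F y - be * F x.
Proof. by rewrite sum_conic_monomials /=; ring. Qed.

Section HasseDerivations.

Variables (L : fieldType) (D : nat -> L -> L).
Hypothesis D0 : forall f, D 0%N f = f.
Hypothesis DD : forall r f g, D r (f + g) = D r f + D r g.
Hypothesis DM : forall r f g, D r (f * g) = \sum_(i < r.+1) D i f * D (r - i)%N g.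
Hypothesis D1 : forall r, (0 < r)%N -> D r 1 = 0.

Lemma hasse1M f g : D 1%N (f * g) = f * D 1%N g + D 1%N f * g.
Proof. by rewrite DM !big_ord_recl big_ord0 /= /bump /= !D0 addr0. Qed.

Lemma hasse1X f k : D 1%N (f ^+ k) = k%:R * f ^+ k.-1 * D 1%N f.
Proof.
elim: k => [|k IHk]; first by rewrite expr0 D1 // !mul0r.
rewrite exprS hasse1M IHk; case: k {IHk} => [|k]; first by rewrite expr0; ring.
by rewrite exprS -[k.+2]addn1 natrD /=; ring.
Qed.

Definition hasse_const m f := forall i, (0 < i < m)%N -> D i f = 0.

Lemma hasse_const_leq m m' f : (m <= m')%N -> hasse_const m' f -> hasse_const m f.
Proof. by move=> mm' Cf i /andP[i0 im]; rewrite Cf // i0 (leq_trans im mm'). Qed.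

Lemma hasse_constMl m f g r :
  hasse_const m f -> (r < m)%N -> D r (f * g) = f * D r g.
Proof.
move=> Cf rm; rewrite DM big_ord_recl D0 subn0 big1 ?addr0 // => i _.
by rewrite Cf ?mul0r //= (leq_ltn_trans _ rm) // -ltnS.
Qed.

Lemma hasse_constM m f g :
  hasse_const m f -> hasse_const m g -> hasse_const m (f * g).
Proof.
by move=> Cf Cg i /andP[i0 im]; rewrite (hasse_constMl _ Cf im) Cg ?i0 ?mulr0.
Qed.

Lemma hasse_constX m f k : hasse_const m f -> hasse_const m (f ^+ k).
Proof.
move=> Cf; elim: k => [|k IHk]; first by move=> i /andP[i0 _]; rewrite expr0 D1.
by rewrite exprS; apply: hasse_constM.
Qed.

Definition hasse_poly m f : {poly L} := \poly_(i < m) D i f.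

Lemma hasseX_coef m f k i :
  (i < m)%N -> D i (f ^+ k) = (hasse_poly m f ^+ k)`_i.
Proof.
elim: k i => [|k IHk] i im.
  by rewrite !expr0 coefC; case: i im => [|i] _; rewrite ?D0 ?D1.
rewrite exprS DM exprS coefM; apply: eq_bigr => j _.
have jm : (j < m)%N by apply: leq_ltn_trans im; rewrite -ltnS.
by rewrite coef_poly jm IHk // (leq_ltn_trans (leq_subr _ _) im).
Qed.

Lemma hasse_const_pchar p f : p \in [pchar L] -> hasse_const p (f ^+ p).
Proof.
move=> pL i /andP[i0 ip]; rewrite (hasseX_coef _ _ ip).
(* The truncated generating series of f is f + X Q, whose p-th power is f^p + X^p Q^p. *)
set Q : {poly L} := \poly_(j < p.-1) D j.+1 f.
have -> : hasse_poly p f = f%:P + 'X * Q.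
  apply/polyP => j; rewrite coefD coefC coefXM !coef_poly.
  case: j => [|j] /=; first by rewrite D0 addr0 (prime_gt0 (pcharf_prime pL)).
  by rewrite add0r -ltn_predRL.
have pP : p \in [pchar {poly L}] by rewrite pchar_poly.
rewrite exprDn_pchar; last by rewrite (eq_pnat _ (pcharf_eq pP)) pnat_id // (pcharf_prime pL).
rewrite -polyC_exp exprMn coefD coefC coefXnM.
by rewrite ip (gtn_eqF i0) add0r.
Qed.

Variable x : L.
Hypothesis Dx1 : D 1%N x = 1.
Hypothesis Dx : forall r, (1 < r)%N -> D r x = 0.

Lemma hasse_mulX r g : D r.+1 (x * g) = x * D r.+1 g + D r g.
Proof.
rewrite DM big_ord_recl D0 subn0 big_ord_recl /= Dx1 mul1r subSS subn0.
by rewrite big1 ?addr0 // => i _; rewrite Dx ?mul0r.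
Qed.

Section ConicRelation.

Variables (y al be : L).
Hypotheses (Cal : hasse_const 5 al) (Cbe : hasse_const 5 be).
Hypothesis xy_rel : x * y = al * y + be * x.
Hypotheses (al0 : al != 0) (be0 : be != 0) (w0 : x - al != 0).

Lemma hasse_mul_xy r : (r < 5)%N -> D r (x * y) = al * D r y + be * D r x.
Proof.
by move=> r5; rewrite xy_rel DD !(hasse_constMl _ _ r5) // addrC.
Qed.

Lemma hasse1_y : (x - al) * D 1%N y = be - y.
Proof.
have := hasse_mul_xy (isT : (1 < 5)%N); rewrite hasse_mulX D0 Dx1 => E.
by apply: (eq_lincomb E (k1 := 1)); ring.
Qed.

Lemma hasseS_y r : (0 < r < 4)%N -> D r.+1 y = - D r y / (x - al).
Proof.
case/andP=> r0 r4; have := hasse_mul_xy (r4 : (r.+1 < 5)%N).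
rewrite hasse_mulX Dx // mulr0 addr0 => E.
by apply: (mulfI w0); apply: (eq_lincomb E (k1 := 1)); field.
Qed.

Lemma hasse1_y_neq0 : D 1%N y != 0.
Proof.
have : (x - al) ^+ 2 * D 1%N y = - (al * be).
  by rewrite expr2 -mulrA hasse1_y; apply: (eq_lincomb xy_rel (k1 := -1)); ring.
move=> E; apply/eqP => y10; move: E; rewrite y10 mulr0 => /eqP.
by rewrite eq_sym oppr_eq0 (negPf (mulf_neq0 al0 be0)).
Qed.

Lemma hasse_conic_free c0 c1 c2 c3 c5 :
  (forall r, (r < 5)%N -> c0 * D r 1 + c1 * D r x + c2 * D r y
      + c3 * D r (x ^+ 2) + c5 * D r (y ^+ 2) = 0) ->
  [/\ c0 = 0, c1 = 0, c2 = 0, c3 = 0 & c5 = 0].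
Proof.
move=> E; have := E 0%N isT; have := E 1%N isT; have := E 2%N isT.
have := E 3%N isT; have := E 4%N isT.
rewrite !expr2 !DM !big_ord_recl !big_ord0 /= /bump /= !addn0 !add1n !subSS !subn0.
rewrite !D0 !D1 // Dx1 !Dx //.
have y10 := hasse1_y_neq0; set y1 := D 1%N y in y10 *.
have ey2 : D 2 y = - y1 / (x - al) by rewrite hasseS_y.
have ey3 : D 3 y = y1 / (x - al) ^+ 2 by rewrite hasseS_y // ey2; field.
have ey4 : D 4 y = - y1 / (x - al) ^+ 3 by rewrite hasseS_y // ey3; field.
rewrite ey4 ey3 ey2 => E4 E3 E2 E1 E0.
have yw0 k : y1 / (x - al) ^+ k != 0 by rewrite mulf_neq0 ?invr_eq0 ?expf_neq0.
(* Rows 3 and 4 only involve c2 and c5; this combination of them isolates c5. *)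
have c5_0 : c5 = 0.
  apply: (mulIf (yw0 2%N)); rewrite mul0r.
  by apply: (eq_lincomb2 E3 E4 (k1 := (x - al)^-1 / y1) (k2 := y1^-1)); field; rewrite w0 y10.
have c2_0 : c2 = 0.
  apply: (mulIf (yw0 2%N)); rewrite mul0r.
  by apply: (eq_lincomb E3 (k1 := 1)); rewrite c5_0; ring.
have c3_0 : c3 = 0 by apply: (eq_lincomb E2 (k1 := 1)); rewrite c2_0 c5_0; ring.
have c1_0 : c1 = 0 by apply: (eq_lincomb E1 (k1 := 1)); rewrite c2_0 c3_0 c5_0; ring.
split=> //; apply: (eq_lincomb E0 (k1 := 1)); rewrite c1_0 c2_0 c3_0 c5_0; ring.
Qed.

Lemma hasse_conic_relation r : (r < 5)%N ->
  \sum_(j < 6) (conic_relation al be)`_j * D r (conic_monomials x y)`_j = 0.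
Proof. by move=> r5; rewrite sum_conic_relation hasse_mul_xy //; ring. Qed.

Lemma hasse_conic_kernel (c : 'I_6 -> L) :
  (forall r, (r < 5)%N -> \sum_(j < 6) c j * D r (conic_monomials x y)`_j = 0) ->
  forall j, c j = c (@Ordinal 6 4 isT) * (conic_relation al be)`_j.
Proof.
set c4 := c (@Ordinal 6 4 isT) => E.
have [] := @hasse_conic_free (c (@Ordinal 6 0 isT)) (c (@Ordinal 6 1 isT) + c4 * be)
  (c (@Ordinal 6 2 isT) + c4 * al) (c (@Ordinal 6 3 isT)) (c (@Ordinal 6 5 isT)).
  move=> r r5; have := E r r5; rewrite sum_conic_monomials hasse_mul_xy // => Er.
  by apply: (eq_lincomb Er (k1 := 1)); rewrite -/c4; ring.
move=> e0 e1 e2 e3 e5.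
case=> [[|[|[|[|[|[|j]]]]]] Hj] //=; rewrite (bool_irrelevance Hj isT) ?e0 ?e3 ?e5 ?mulr0 //.
- by apply: (eq_lincomb e1 (k1 := 1)); ring.
- by apply: (eq_lincomb e2 (k1 := 1)); ring.
- by rewrite mulr1.
Qed.

Lemma frob_det_classical_eq0 q :
  \det (frob_matrix q D x y classical_seq) = 0 <->
  (x * y) ^+ q = be * x ^+ q + al * y ^+ q.
Proof.
set M := frob_matrix q D x y classical_seq.
have rowM (v : 'rV[L]_6) i : (v *m M^T) 0 i = \sum_(j < 6) v 0 j * M i j.
  by rewrite !mxE; apply: eq_bigr => j _; rewrite mxE.
have M0 j : M ord0 j = (conic_monomials x y)`_j ^+ q by rewrite mxE unlift_none.
have MS (k : 'I_5) j : M (lift ord0 k) j = D k (conic_monomials x y)`_j.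
  by rewrite mxE liftK.
split=> [/eqP | Frel].
  rewrite -det_tr => /det0P[v v0 vM].
  have vrel : forall j, v 0 j = v 0 (@Ordinal 6 4 isT) * (conic_relation al be)`_j.
    apply: hasse_conic_kernel => r r5.
    have := congr1 (fun A : 'rV[L]_6 => A 0 (lift ord0 (Ordinal r5))) vM; rewrite rowM mxE.
    by under eq_bigr => j _ do rewrite MS.
  set v4 := v 0 (@Ordinal 6 4 isT) in vrel.
  have v40 : v4 != 0.
    apply: contraNneq v0 => v4z; apply/eqP/rowP => j.
    by rewrite mxE vrel v4z mul0r.
  apply: (mulfI v40); have := congr1 (fun A : 'rV[L]_6 => A 0 ord0) vM; rewrite rowM mxE.
  under eq_bigr => j _ do rewrite vrel M0 -mulrA.
  rewrite -mulr_sumr (sum_conic_relation _ _ _ _ (fun t => t ^+ q)) => E.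
  by apply: (eq_lincomb E (k1 := 1)); ring.
apply/eqP; rewrite -det_tr; apply/det0P.
exists (\row_j (conic_relation al be)`_j).
  by apply/eqP => /rowP /(_ (@Ordinal 6 4 isT)); rewrite !mxE => /eqP; rewrite oner_eq0.
apply/rowP => i; rewrite rowM mxE; case: (unliftP ord0 i) => [k ->|->].
  under eq_bigr => j _ do rewrite mxE MS.
  exact: hasse_conic_relation.
under eq_bigr => j _ do rewrite mxE M0.
by rewrite (sum_conic_relation _ _ _ _ (fun t => t ^+ q)) /= Frel; ring.
Qed.

End ConicRelation.
End HasseDerivations.

Lemma pchar_exprD_expn (L : fieldType) p j (u v : L) :
  p \in [pchar L] -> (u + v) ^+ (p ^ j) = u ^+ (p ^ j) + v ^+ (p ^ j).
Proof.
move=> pL; apply: exprDn_pchar.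
by rewrite (eq_pnat _ (pcharf_eq pL)) pnatX pnat_id // (pcharf_prime pL).
Qed.

Lemma pchar_expn_inj (L : fieldType) p j (u v : L) :
  p \in [pchar L] -> u ^+ (p ^ j) = v ^+ (p ^ j) -> u = v.
Proof.
move=> pL; elim: j u v => [|j IHj] u v; first by rewrite expn0 !expr1.
rewrite expnSr !exprM => E; apply: IHj; apply: (fmorph_inj (pFrobenius_aut pL)).
by rewrite /= !pFrobenius_autE.
Qed.

Lemma expn_fixed_root (K : fieldType) p h j (c : K) :
  (0 < h)%N -> c ^+ (p ^ h) = c -> (c ^+ (p ^ (h * j - j))) ^+ (p ^ j) = c.
Proof.
move=> h0 cq; rewrite -exprM -expnD subnK ?leq_pmull // expnM.
by elim: j => [|j IHj]; rewrite ?expr1 // expnSr exprM IHj cq.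
Qed.

Lemma classical_seq_lex_min mu : strictly_increasing5 mu -> lex_le5 classical_seq mu.
Proof.
move=> mu_inc; have mu_ge (i : 'I_5) : (i <= mu i)%N.
  case: i => i; elim: i => // i IHi i5.
  by apply: leq_ltn_trans (IHi (ltnW i5)) (mu_inc _ (Ordinal i5) _).
case: (boolP [forall i, mu i == i]) => [/forallP eq_mu | /forallPn ex_neq].
  by left => i; apply/esym/eqP.
right; have ex_k : exists k, (k < 5)%N && (mu (inord k) != k).
  by case: ex_neq => i neq; exists i; rewrite ltn_ord inord_val.
case: (ex_minnP ex_k) => k /andP[k5 neq] k_min.
have ek : inord k = Ordinal k5 by apply: val_inj; rewrite /= inordK.
rewrite ek in neq.
exists (Ordinal k5); split => [i ik | ].
  apply/esym/eqP; apply: contraTT ik => neqi; rewrite -leqNgt.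
  by apply: k_min; rewrite ltn_ord inord_val.
by rewrite /classical_seq ltn_neqAle eq_sym neq mu_ge.
Qed.

Lemma frobenius_nonclassicalE (L : fieldType) q (D : nat -> L -> L) (x y : L) :
  frobenius_nonclassical q D x y <-> \det (frob_matrix q D x y classical_seq) = 0.
Proof.
split=> [nc | det0 [[_]]]; last by rewrite det0 eqxx.
have [// | det0] := eqVneq (\det (frob_matrix q D x y classical_seq)) 0.
case: nc; split=> [| mu [mu_inc _]]; first by split=> // i j.
exact: classical_seq_lex_min.
Qed.

Section FermatRelations.

Variables (K L : fieldType) (iota : {rmorphism K -> L}) (D : nat -> L -> L) (x y : L).
Hypothesis D0 : forall f, D 0%N f = f.
Hypothesis DD : forall r f g, D r (f + g) = D r f + D r g.
Hypothesis DM : forall r f g, D r (f * g) = \sum_(i < r.+1) D i f * D (r - i)%N g.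
Hypothesis Dc : forall r c, (0 < r)%N -> D r (iota c) = 0.
Hypothesis Dx1 : D 1%N x = 1.
Hypothesis Dx : forall r, (1 < r)%N -> D r x = 0.
Hypothesis x_tr : transcendental_over iota x.

Let D1 r : (0 < r)%N -> D r 1 = 0.
Proof. by move=> r0; rewrite -(rmorph1 iota) Dc. Qed.

Let hasse1_iotaX c f k : D 1%N (iota c * f ^+ k) = iota c * (k%:R * f ^+ k.-1 * D 1%N f).
Proof. by rewrite hasse1M // Dc // mul0r addr0 (hasse1X D0 DM D1). Qed.

Lemma hasse1_fermat a b m :
  iota a * x ^+ m.+1 + iota b * y ^+ m.+1 = 1 -> m.+1%:R != 0 :> L ->
  iota a * x ^+ m + iota b * y ^+ m * D 1%N y = 0.
Proof.
move=> /(congr1 (D 1%N)); rewrite DD !hasse1_iotaX D1 // Dx1 => E m0.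
by apply: (mulfI m0); apply: (eq_lincomb E (k1 := 1)); ring.
Qed.

Lemma hasse1_dual a b m :
  x ^+ m.+1 * y ^+ m.+1 = iota b * x ^+ m.+1 + iota a * y ^+ m.+1 -> m.+1%:R != 0 :> L ->
  iota a * y ^+ m.+2 + iota b * x ^+ m.+2 * D 1%N y = 0.
Proof.
move=> rel; have := congr1 (D 1%N) rel.
rewrite hasse1M // DD !hasse1_iotaX !hasse1X // Dx1 /= => E m0.
apply: (mulfI m0).
apply: (eq_lincomb2 E rel (k1 := x * y) (k2 := - m.+1%:R * (y + x * D 1%N y))).
by rewrite !exprS; ring.
Qed.

Lemma transcendental_neq0 : x != 0.
Proof. by have := x_tr (P := 'X); rewrite polyX_eq0 map_polyX hornerX; apply. Qed.

Lemma transcendental_subX_neq0 c m : x - iota c * x ^+ m.+2 != 0.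
Proof.
have : 'X - c%:P * 'X^(m.+2) != 0 :> {poly K}.
  apply/eqP => /(congr1 (fun P : {poly K} => P`_1)).
  by rewrite coefB coefX coefCM coefXn coef0 mulr0 subr0 => /eqP; rewrite oner_eq0.
by move/x_tr; rewrite rmorphB rmorphM /= map_polyX map_polyC map_polyXn !hornerE.
Qed.

Variables (a b : K) (n : nat).
Hypotheses (a0 : a != 0) (b0 : b != 0) (n0 : n.+1%:R != 0 :> L).
Hypothesis curve : iota a * x ^+ n.+1 + iota b * y ^+ n.+1 = 1.

Lemma fermat_no_monomial_relation c1 c2 N : c2 != 0 -> (0 < N)%N ->
  iota c1 * x ^+ N = iota c2 * y ^+ N -> False.
Proof.
move=> c20 N0 rel.
(* By the curve equation, P(x) = b^N ((c1 x^N)^(n+1) - (c2 y^N)^(n+1)). *)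
pose P : {poly K} := (c1 ^+ n.+1 * b ^+ N)%:P * 'X^(N * n.+1)
  - (c2 ^+ n.+1)%:P * (1 - a%:P * 'X^(n.+1)) ^+ N.
have : P != 0.
  apply: contraTneq (expf_neq0 n.+1 c20) => P0; have := congr1 (horner^~ 0) P0.
  rewrite !hornerE !expr0n muln_eq0 (gtn_eqF N0) /= mulr0 mulr0 subr0 expr1n.
  by rewrite mulr1 sub0r => /eqP; rewrite oppr_eq0 negbK.
move/x_tr; rewrite rmorphB !rmorphM /= !rmorphXn rmorphB rmorph1 rmorphM /=.
rewrite !map_polyC !map_polyXn !hornerE map_polyX hornerX.
have -> : 1 - iota a * x ^+ n.+1 = iota b * y ^+ n.+1 by rewrite -curve; ring.
have commX (t : L) : (t ^+ n.+1) ^+ N = (t ^+ N) ^+ n.+1 by rewrite -!exprM mulnC.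
rewrite exprM exprMn !commX; apply/negP; rewrite negbK; apply/eqP.
by rewrite mulrAC -exprMn rel exprMn mulrCA mulrA [X in X - _]mulrC mulrA subrr.
Qed.

Lemma fermat_y_neq0 : y != 0.
Proof.
apply/eqP => y0; move: curve; rewrite y0 expr0n mulr0 addr0 => ax1.
have : a%:P * 'X^(n.+1) - 1 != 0 :> {poly K}.
  apply: contraTneq isT => P0; have := congr1 (horner^~ 0) P0.
  by rewrite !hornerE expr0n mulr0 sub0r => /eqP; rewrite oppr_eq0 oner_eq0.
move/x_tr; rewrite rmorphB rmorphM /= map_polyC map_polyXn rmorph1 !hornerE ax1.
by rewrite subrr eqxx.
Qed.

Lemma fermat_exponent_unique a' b' m : a' != 0 -> b' != 0 -> m.+1%:R != 0 :> L ->
  iota a' * x ^+ m.+1 + iota b' * y ^+ m.+1 = 1 -> m = n.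
Proof.
move=> a'0 b'0 m0 rel'.
have E : iota (a * b') * x ^+ n * y ^+ m = iota (a' * b) * x ^+ m * y ^+ n.
  apply: (eq_lincomb2 (hasse1_fermat curve n0) (hasse1_fermat rel' m0)
    (k1 := iota b' * y ^+ m) (k2 := - iota b * y ^+ n)).
  by rewrite !rmorphM; ring.
have xy0 k : x ^+ k * y ^+ k != 0.
  by rewrite mulf_neq0 ?expf_neq0 ?transcendental_neq0 ?fermat_y_neq0.
case: (ltngtP m n) => // [mn | nm]; exfalso.
- have [k nk] : exists k, n = (m + k.+1)%N by exists (n - m.+1)%N; lia.
  rewrite nk !exprD in E.
  apply: (fermat_no_monomial_relation (c1 := a * b') (c2 := a' * b) (N := k.+1)) => //.
    exact: mulf_neq0.
  by apply: (mulfI (xy0 m)); apply: (eq_lincomb E (k1 := 1)); rewrite !rmorphM; ring.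
- have [k mk] : exists k, m = (n + k.+1)%N by exists (m - n.+1)%N; lia.
  rewrite mk !exprD in E.
  apply: (fermat_no_monomial_relation (c1 := a' * b) (c2 := a * b') (N := k.+1)) => //.
    exact: mulf_neq0.
  by apply: (mulfI (xy0 n)); apply: (eq_lincomb E (k1 := -1)); rewrite !rmorphM; ring.
Qed.

Lemma fermat_no_dual_relation a' b' m : a' != 0 -> b' != 0 -> m.+1%:R != 0 :> L ->
  x ^+ m.+1 * y ^+ m.+1 = iota b' * x ^+ m.+1 + iota a' * y ^+ m.+1 -> False.
Proof.
move=> a'0 b'0 m0 rel'.
apply: (fermat_no_monomial_relation (c1 := a * b') (c2 := a' * b) (N := (n + m.+2)%N)).
- exact: mulf_neq0.
- by rewrite addnS.
- apply: (eq_lincomb2 (hasse1_fermat curve n0) (hasse1_dual rel' m0)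
    (k1 := iota b' * x ^+ m.+2) (k2 := - iota b * y ^+ n)).
  by rewrite !rmorphM !exprD; ring.
Qed.

Variables (p h : nat).
Hypotheses (p_pr : prime p) (h0 : (0 < h)%N) (pL : p \in [pchar L]).
Hypotheses (aq : a ^+ (p ^ h) = a) (bq : b ^+ (p ^ h) = b).

Let fixed_root c j : c ^+ (p ^ h) = c -> c != 0 ->
  exists2 c', c' != 0 & iota c = iota c' ^+ (p ^ j).
Proof.
move=> cq c0; exists (c ^+ (p ^ (h * j - j))); first exact: expf_neq0.
by rewrite -rmorphXn expn_fixed_root.
Qed.

Let coprime_natr_neq0 m : coprime p m -> m%:R != 0 :> L.
Proof. by rewrite prime_coprime // (dvdn_pcharf pL). Qed.

Lemma fermat_exponent_minimal c d e :
  c ^+ (p ^ h) = c -> d ^+ (p ^ h) = d -> c != 0 -> d != 0 -> (0 < e)%N ->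
  iota c * x ^+ e + iota d * y ^+ e = 1 -> (n < e)%N.
Proof.
move=> cq dq c0 d0 e0 rel.
have [[|m] cop ee] := pfactor_coprime p_pr e0; first by rewrite ee in e0.
set j := logn p e in ee.
have [c' c'0 ec] := fixed_root j cq c0; have [d' d'0 ed] := fixed_root j dq d0.
have rel' : iota c' * x ^+ m.+1 + iota d' * y ^+ m.+1 = 1.
  apply: (pchar_expn_inj (j := j) pL).
  by rewrite pchar_exprD_expn // !exprMn -!exprM -ee -ec -ed rel expr1n.
rewrite -(fermat_exponent_unique c'0 d'0 (coprime_natr_neq0 cop) rel') ee.
by rewrite leq_pmulr // expn_gt0 prime_gt0.
Qed.

Lemma fermat_no_dual_relation_fixed c d e :
  c ^+ (p ^ h) = c -> d ^+ (p ^ h) = d -> c != 0 -> d != 0 -> (0 < e)%N ->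
  x ^+ e * y ^+ e = iota d * x ^+ e + iota c * y ^+ e -> False.
Proof.
move=> cq dq c0 d0 e0 rel.
have [[|m] cop ee] := pfactor_coprime p_pr e0; first by rewrite ee in e0.
set j := logn p e in ee.
have [c' c'0 ec] := fixed_root j cq c0; have [d' d'0 ed] := fixed_root j dq d0.
apply: (fermat_no_dual_relation c'0 d'0 (coprime_natr_neq0 cop)).
apply: (pchar_expn_inj (j := j) pL).
by rewrite pchar_exprD_expn // !exprMn -!exprM -ee -ec -ed.
Qed.

Lemma fermat_frobenius_relation : (p %| n.+2)%N ->
  (x * y) ^+ (p ^ h) = iota b * y ^+ n.+2 * x ^+ (p ^ h) + iota a * x ^+ n.+2 * y ^+ (p ^ h) ->
  a + b = 1 /\ n.+2 = (p ^ h)%N.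
Proof.
move=> pn R; have xy0 k : x ^+ k * y ^+ k != 0.
  by rewrite mulf_neq0 ?expf_neq0 ?transcendental_neq0 ?fermat_y_neq0.
have pq : (p %| p ^ h)%N by rewrite dvdn_exp.
have q2 : (1 < p ^ h)%N by rewrite -[1%N](expn0 p) ltn_exp2l ?prime_gt1.
case: (ltngtP n.+2 (p ^ h)) => [lt | gt | eq].
- exfalso; have [e qe] : exists e, (p ^ h = n.+2 + e.+1)%N by exists (p ^ h - n.+3)%N; lia.
  apply: (fermat_no_dual_relation_fixed aq bq a0 b0 (ltn0Sn e)).
  apply: (mulfI (xy0 n.+2)); move: R; rewrite qe !exprD !exprMn => R.
  by apply: (eq_lincomb R (k1 := 1)); ring.
- exfalso; have [e ne] : exists e, (n.+2 = p ^ h + e.+1)%N by exists (n.+1 - p ^ h)%N; lia.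
  have : (n < e.+1)%N.
    apply: (fermat_exponent_minimal aq bq a0 b0 (ltn0Sn e)).
    apply: (mulfI (xy0 (p ^ h)%N)); move: R; rewrite ne !exprD !exprMn => R.
    by apply: (eq_lincomb R (k1 := -1)); ring.
  lia.
split=> //; apply: (fmorph_inj iota); rewrite rmorphD rmorph1.
apply: (mulfI (xy0 n.+2)); move: R; rewrite -eq !exprMn => R.
by apply: (eq_lincomb R (k1 := -1)); ring.
Qed.

Lemma fermat_frobenius_nonclassical : (4 < p)%N -> (p %| n.+2)%N ->
  frobenius_nonclassical (p ^ h) D x y <-> a + b = 1 /\ n.+1 = (p ^ h).-1.
Proof.
move=> p4 pn; have Cpow f : hasse_const D 5 (f ^+ n.+2).
  have [k ->] := dvdnP pn; rewrite mulnC exprM.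
  by apply: hasse_const_leq p4 _; apply/hasse_constX/hasse_const_pchar.
have Cc c : hasse_const D 5 (iota c) by move=> i /andP[i0 _]; exact: Dc.
have x0 := transcendental_neq0; have y0 := fermat_y_neq0.
set al := iota a * x ^+ n.+2; set be := iota b * y ^+ n.+2.
have xy_rel : x * y = al * y + be * x.
  by apply: (eq_lincomb curve (k1 := - (x * y))); rewrite /al /be !exprS; ring.
have al0 : al != 0 by rewrite mulf_neq0 ?fmorph_eq0 ?expf_neq0.
have be0 : be != 0 by rewrite mulf_neq0 ?fmorph_eq0 ?expf_neq0.
rewrite frobenius_nonclassicalE (frob_det_classical_eq0 D0 DD DM D1 Dx1 Dx
  (hasse_constM D0 DM (Cc a) (Cpow x)) (hasse_constM D0 DM (Cc b) (Cpow y)) xy_rel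
  al0 be0 (transcendental_subX_neq0 a n)).
split=> [R | [ab1 nq]]; first by have [-> <-] := fermat_frobenius_relation pn R.
have qE : (p ^ h)%N = n.+2 by rewrite nq prednK // expn_gt0 prime_gt0.
have iota_ab1 : iota a + iota b = 1 by rewrite -rmorphD ab1 rmorph1.
rewrite /al /be qE; apply: (eq_lincomb iota_ab1 (k1 := - (x ^+ n.+2 * y ^+ n.+2))).
by rewrite exprMn; ring.
Qed.

End FermatRelations.

Lemma closed_field_expn_root (K : closedFieldType) (c : K) n :
  (0 < n)%N -> exists t, t ^+ n = c.
Proof.
move=> n0; have /closed_rootP[t] : size ('X^n - c%:P : {poly K}) != 1%N.
  by rewrite size_XnsubC // eqSS -lt0n.
by rewrite rootE !hornerE subr_eq0 => /eqP; exists t.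
Qed.

Lemma binomial_form_reducible (K : closedFieldType) (i : 'I_3) (c : K) n :
  i != 2 :> 'I_3 -> (1 < n)%N -> 2%:R != 0 :> K ->
  ~ mpoly_irreducible ((c *: 'X_i) ^+ n - 'X_(2 : 'I_3) ^+ n).
Proof.
move=> i2 n1 two0 [_ irr].
set Q := c *: 'X_i - 'X_(2 : 'I_3).
set S := \sum_(j < n) (c *: 'X_i) ^+ (n.-1 - j) * 'X_(2 : 'I_3) ^+ j.
pose ev (t : K) : 'I_3 -> K := fun j => if j == 2 :> 'I_3 then t else 0.
have evQ t : Q.@[ev t] = - t.
  by rewrite mevalB mevalZ !mevalXU /ev (negPf i2) eqxx mulr0 sub0r.
have evP t : ((c *: 'X_i) ^+ n - 'X_(2 : 'I_3) ^+ n).@[ev t] = - t ^+ n.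
  rewrite mevalB !rmorphXn /= mevalZ !mevalXU /ev (negPf i2) eqxx mulr0.
  by rewrite expr0n gtn_eqF ?sub0r // ltnW.
case: (irr Q S (subrXX _ _ _)) => /msize1_polyC SC.
  have := evQ 1; have := evQ 0; rewrite SC !mevalC => -> /eqP.
  by rewrite oppr0 eq_sym oppr_eq0 oner_eq0.
have evPS t : - t ^+ n = - t * S@_0.
  by rewrite -evP (subrXX _ _ n) -/Q -/S mevalM evQ {1}SC mevalC.
have S1 : S@_0 = 1 by have := evPS 1; rewrite expr1n mulN1r => /oppr_inj <-.
(* A constant cofactor forces t^(n-1) = 1 for every t != 0; take t^(n-1) = 2. *)
have n10 : (0 < n.-1)%N by rewrite -ltnS prednK // ltnW.
have [t t2] := closed_field_expn_root (2%:R : K) n10.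
have := evPS t; rewrite S1 mulr1 -(prednK (ltnW n1)) exprS t2 => /oppr_inj/eqP.
rewrite -subr_eq0 -{2}[t]mulr1 -mulrBr mulf_eq0 => /orP[/eqP t0 | ].
  by move: t2; rewrite t0 expr0n gtn_eqF // => /eqP; rewrite eq_sym (negPf two0).
by rewrite -[2%:R]/(1 + 1) addrK oner_eq0.
Qed.

Lemma fermat_irreducible_coef_neq0 (K : closedFieldType) (a b : K) n :
  (1 < n)%N -> 2%:R != 0 :> K -> mpoly_irreducible (fermat_poly a b n) ->
  a != 0 /\ b != 0.
Proof.
move=> n1 two0 irr; split; apply/eqP => c0; move: irr; rewrite /fermat_poly c0 scale0r.
- rewrite add0r; have [t <-] := closed_field_expn_root b (ltnW n1).
  by rewrite -exprZn; apply: binomial_form_reducible.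
- rewrite addr0; have [t <-] := closed_field_expn_root a (ltnW n1).
  by rewrite -exprZn; apply: binomial_form_reducible.
Qed.

Theorem theoremB1
  (p h n : nat) (K : closedFieldType) (a b : K)
  (L : fieldType) (iota : {rmorphism K -> L}) (x y : L) (D : nat -> L -> L) :
  prime p -> (5 < p)%N -> (0 < h)%N -> (3 < n)%N ->
  is_alg_closure_Fp p K ->
  a ^+ (p ^ h) = a -> b ^+ (p ^ h) = b ->
  mpoly_irreducible (fermat_poly a b n) ->
  transcendental_over iota x ->
  iota a * x ^+ n + iota b * y ^+ n = 1 ->
  hasse_derivation iota x D ->
  (p %| n.+1)%N ->
  (frobenius_nonclassical (p ^ h) D x y <-> (a + b = 1 /\ n = (p ^ h).-1)).
Proof.
move=> p_pr p5 h0 n3 [pK _] aq bq irr x_tr curve [D0 DD DM Dc [Dx1 Dx]] pn.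
have [a0 b0] : a != 0 /\ b != 0.
  apply: fermat_irreducible_coef_neq0 irr; first by lia.
  by rewrite -(dvdn_pcharf pK); apply/negP => /(dvdn_leq (isT : (0 < 2)%N)); lia.
have pL : p \in [pchar L] := rmorph_pchar iota pK.
case: n n3 irr curve pn => // n _ _ curve pn.
have n0 : n.+1%:R != 0 :> L.
  rewrite -(dvdn_pcharf pL); apply/negP => /(dvdn_sub pn); rewrite subSnn dvdn1.
  by move: p5; case: (p) => [|[]].
exact: (fermat_frobenius_nonclassical D0 DD DM Dc Dx1 Dx x_tr a0 b0 n0 curve p_pr h0 pL
  aq bq (ltnW p5) pn).
Qed.
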